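(* Let $s \geq 2$ and let $b_1,\dots,b_s \geq 2$ be pairwise coprime integers, $B = b_1\cdots b_s$, $B^{(i)} = B/b_i$, and $\tau_i = \min\{1 \leq k < B^{(i)} : b_i^k \equiv 1 \pmod{B^{(i)}}\}$ for $i=1,\dots,s$. Let $m \geq B$ be an integer, $y_i = \sum_{j=1}^m b_i^{-j\tau_i}$ and $\boldsymbol{y} = (y_1,\dots,y_s)$. For a vector $\boldsymbol{r} = (r_1,\dots,r_s)$ of positive integers put $B_{\boldsymbol{r}} = \prod_{i=1}^s b_i^{r_i}$ and let $M_{i,\boldsymbol{r}}$ be an integer with $M_{i,\boldsymbol{r}}\, (B_{\boldsymbol{r}} b_i^{-r_i}) \equiv 1 \pmod{b_i^{r_i}}$. For $\boldsymbol{k} = (k_1,\dots,k_s) \in \{1,\dots,m\}^s$ write $\boldsymbol{\tau}\cdot\boldsymbol{k} = (\tau_1k_1,\dots,\tau_sk_s)$, and for an integer $\ell\ge1$ write $\boldsymbol{\tau}\ell = (\tau_1\ell,\dots,\tau_s\ell)$. Let $A_{\boldsymbol{k}} \in [0, B_{\boldsymbol{\tau}\cdot\boldsymbol{k}})$ be the integer with \[ A_{\boldsymbol{k}} \equiv -\sum_{i=1}^s M_{i,\boldsymbol{\tau}\cdot\boldsymbol{k}}\, B_{\boldsymbol{\tau}\cdot\boldsymbol{k}}\, b_i^{-1} \pmod{B_{\boldsymbol{\tau}\cdot\boldsymbol{k}}}, \] and let $\tilde{y}_m \in [0, B_{\boldsymbol{\tau}(m+1)})$ be the integer with \[ \tilde{y}_m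 \equiv \sum_{i=1}^s M_{i,\boldsymbol{\tau}(m+1)}\, B_{\boldsymbol{\tau}(m+1)}\, b_i^{-\tau_i(m+1)} \sum_{j=1}^{m+1} b_i^{j\tau_i - 1} \pmod{B_{\boldsymbol{\tau}(m+1)}}. \] Define \[ \alpha_m := \frac{1}{B_{\boldsymbol{\tau}m}} \sum_{N=1}^{B_{\boldsymbol{\tau}m}} \Delta\big(\boldsymbol{y},(H_s(n))_{n=\tilde{y}_m}^{\tilde{y}_m + N -1}\big). \] Then \[ \alpha_m = \sum_{1 \leq k_1, \ldots, k_s \leq m} \Big(\frac{1}{2} - \frac{A_{\boldsymbol{k}}}{B_{\boldsymbol{\tau} \cdot \boldsymbol{k}}}-\frac{1}{2 B_{\boldsymbol{\tau} \cdot \boldsymbol{k}}}\Big). \]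
   Context: For an integer $b \geq 2$, the radical inverse function is $\phi_b(n) = \sum_{j\geq 0} n_j b^{-j-1}$ where $n=\sum_{j\ge0} n_j b^j$, $n_j\in\{0,\dots,b-1\}$. The $s$-dimensional Halton sequence in bases $b_1,\dots,b_s$ is $H_s(n) = (\phi_{b_1}(n),\dots,\phi_{b_s}(n))$, $n\in\mathbb{N}_0$. For integers $a \geq 0$, $N\geq1$ and $\boldsymbol{y}=(y_1,\dots,y_s)$, $\Delta(\boldsymbol{y},(H_s(n))_{n=a}^{a+N-1}) = \sum_{n=a}^{a+N-1}\big(\chi_{[0,y_1)\times\cdots\times[0,y_s)}(H_s(n)) - y_1\cdots y_s\big)$. *)

(* all quantities are rational, so we work in [rat]. *)
From HB Require Import structures.
From mathcomp Require Import all_boot all_order all_algebra.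
Set Implicit Arguments. Unset Strict Implicit. Unset Printing Implicit Defensive.
Import Order.TTheory GRing.Theory Num.Theory.
Local Open Scope ring_scope.

Definition digit (b n j : nat) : nat := (n %/ b ^ j %% b)%N.

(* radical inverse phi_b(n) = sum_{j>=0} n_j b^{-j-1}.  For b >= 2 all digits
   n_j with j > n vanish, so summing over j < n.+1 is the full sum. *)
Definition radinv (b n : nat) : rat :=
  \sum_(j < n.+1) (digit b n j)%:R / (b ^ j.+1)%:R.

Definition halton (s : nat) (b : 'I_s -> nat) (n : nat) : 'I_s -> rat :=
  fun i => radinv (b i) n.

Definition Delta (s : nat) (b : 'I_s -> nat) (y : 'I_s -> rat) (a N : nat) : rat :=
  \sum_(a <= n < a + N)
     ((if [forall i, (0 <= halton b n i) && (halton b n i < y i)] then 1 else 0)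
      - \prod_(i < s) y i).

Definition Bprod (s : nat) (b : 'I_s -> nat) : nat := (\prod_(i < s) b i)%N.

Definition Bexc (s : nat) (b : 'I_s -> nat) (i : 'I_s) : nat := (Bprod b %/ b i)%N.

(* tau_i = min { 1 <= k < B^(i) : b_i^k = 1 mod B^(i) } (0 if the set is empty) *)
Definition tau (s : nat) (b : 'I_s -> nat) (i : 'I_s) : nat :=
  head 0%N [seq k <- iota 1 (Bexc b i).-1 | b i ^ k == 1 %[mod Bexc b i]].

Definition yvec (s : nat) (b : 'I_s -> nat) (m : nat) : 'I_s -> rat :=
  fun i => \sum_(1 <= j < m.+1) ((b i ^ (j * tau b i))%:R)^-1.

Definition Bpow (s : nat) (b : 'I_s -> nat) (r : 'I_s -> nat) : nat :=
  (\prod_(i < s) b i ^ r i)%N.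

Definition tauk (s : nat) (b : 'I_s -> nat) (k : 'I_s -> nat) : 'I_s -> nat :=
  fun i => (tau b i * k i)%N.
Definition taul (s : nat) (b : 'I_s -> nat) (l : nat) : 'I_s -> nat :=
  fun i => (tau b i * l)%N.

Definition Mspec (s : nat) (b : 'I_s -> nat) (M : 'I_s -> ('I_s -> nat) -> int) :=
  forall r : 'I_s -> nat, (forall i, (0 < r i)%N) ->
    forall i, (M i r * (Bpow b r %/ b i ^ r i)%N%:Z == 1 %[mod (b i ^ r i)%N%:Z])%Z.

Definition Acoef (s : nat) (b : 'I_s -> nat) (M : 'I_s -> ('I_s -> nat) -> int)
    (k : 'I_s -> nat) : nat :=
  let r := tauk b k in
  absz ((- \sum_(i < s) M i r * (Bpow b r %/ b i)%N%:Z) %% (Bpow b r)%:Z)%Z.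

Definition ytilde (s : nat) (b : 'I_s -> nat) (M : 'I_s -> ('I_s -> nat) -> int)
    (m : nat) : nat :=
  let r := taul b m.+1 in
  absz ((\sum_(i < s) M i r * (Bpow b r %/ b i ^ (tau b i * m.+1))%N%:Z
            * (\sum_(1 <= j < m.+2) (b i ^ (j * tau b i - 1))%N%:Z))
        %% (Bpow b r)%:Z)%Z.

Definition alpha (s : nat) (b : 'I_s -> nat) (M : 'I_s -> ('I_s -> nat) -> int)
    (m : nat) : rat :=
  let BB := Bpow b (taul b m) in
  (BB%:R)^-1 * \sum_(1 <= N < BB.+1) Delta b (yvec b m) (ytilde b M m) N.

From HB Require Import structures.
From mathcomp Require Import all_boot all_order all_algebra.
From mathcomp Require Import cyclic.
From mathcomp Require Import zify ring lra.
Import Order.TTheory GRing.Theory Num.Theory.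
Set Implicit Arguments. Unset Strict Implicit. Unset Printing Implicit Defensive.
Local Open Scope ring_scope.

(* The targets y_i = sum_(k=1..m) b_i^-(tau_i k) have base-b_i digits 0 and 1,
   with a 1 exactly at the places tau_i k.  Comparing digits from the left,
   phi_(b_i)(n) < y_i iff, for exactly one k, n agrees with y_i on its first
   tau_i k - 1 digits and has a 0 where y_i has its k-th 1, i.e. iff n lies in
   one residue class modulo b_i^(tau_i k).  Multiplying out over i, the local
   discrepancy at n becomes a sum over k in {1..m}^s of the indicator of a
   system of congruences minus 1/B_(tau.k).  Since ytilde_m and A_k are built
   from the Chinese remainder idempotents M_(i,r) B_r / b_i^(r_i), the
   Chinese remainder theorem turns the system for n = ytilde_m + t into
   t = A_k mod B_(tau.k).  For the indicator of one class A mod Q minus 1/Q, the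
   partial sums are Q-periodic and their mean over a multiple of Q is
   1/2 - A/Q - 1/(2Q).  Of tau_i only its positivity matters; it follows from
   Euler's theorem, as s >= 2 makes B/b_i > 1. *)

Definition digits_frac (b : nat) (d : nat -> nat) (L : nat) : rat :=
  \sum_(j < L) (d j)%:R / (b ^ j.+1)%:R.

Definition digits_nat (b : nat) (d : nat -> nat) (L : nat) : nat :=
  (\sum_(j < L) d j * b ^ j)%N.

Lemma digits_fracS b d L :
  digits_frac b d L.+1 = ((d 0%N)%:R + digits_frac b (fun j => d j.+1) L) / b%:R.
Proof.
rewrite /digits_frac big_ord_recl expn1 mulrDl mulr_suml; congr (_ + _).
by apply: eq_bigr => j _; rewrite lift0 expnS mulnC natrM invfM mulrA.
Qed.

Lemma digits_frac_ge0 b d L : 0 <= digits_frac b d L.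
Proof. by apply: sumr_ge0 => j _; rewrite divr_ge0 ?ler0n. Qed.

Lemma digits_frac_lt1 b d L : (forall j, d j < b)%N -> digits_frac b d L < 1.
Proof.
elim: L d => [|L IH] d d_lt_b; first by rewrite /digits_frac big_ord0.
have b_gt0 : (0 < b)%N := leq_ltn_trans (leq0n _) (d_lt_b 0%N).
rewrite digits_fracS ltr_pdivrMr ?ltr0n // mul1r.
have := IH _ (fun j => d_lt_b j.+1).
have : ((d 0%N).+1%:R <= b%:R :> rat) by rewrite ler_nat.
rewrite -addn1 natrD; lra.
Qed.

Lemma digits_frac_widen b d K K' : (forall j, K <= j -> d j = 0)%N -> (K <= K')%N ->
  digits_frac b d K' = digits_frac b d K.
Proof.
move=> d_tail le_KK'; rewrite /digits_frac.
rewrite -!(big_mkord xpredT (fun j => (d j)%:R / (b ^ j.+1)%:R)).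
rewrite (big_cat_nat (leq0n K) le_KK') /= [X in _ + X]big1_seq ?addr0 //.
by move=> j /andP[_]; rewrite mem_index_iota => /andP[le_Kj _]; rewrite d_tail // mul0r.
Qed.

Lemma digits_natS b d p :
  digits_nat b d p.+1 = (d 0%N + b * digits_nat b (fun j => d j.+1) p)%N.
Proof.
rewrite /digits_nat big_ord_recl expn0 muln1 big_distrr; congr (_ + _)%N.
by apply: eq_bigr => j _; rewrite expnS mulnCA.
Qed.

Lemma digits_nat_recr b d p : digits_nat b d p.+1 = (digits_nat b d p + d p * b ^ p)%N.
Proof. by rewrite /digits_nat big_ord_recr. Qed.

Lemma digits_nat_lt b d p : (forall j, d j < b)%N -> (digits_nat b d p < b ^ p)%N.
Proof.
move=> d_lt_b; elim: p => [|p IH]; first by rewrite /digits_nat big_ord0.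
rewrite digits_nat_recr expnS; have := d_lt_b p; nia.
Qed.

Lemma digits_nat_mod b d p P : (p <= P)%N ->
  digits_nat b d P = digits_nat b d p %[mod b ^ p].
Proof.
move=> le_pP; rewrite /digits_nat -!(big_mkord xpredT (fun j => d j * b ^ j)%N).
rewrite (big_cat_nat (leq0n p) le_pP) /= -modnDmr.
rewrite (eqP (_ : b ^ p %| \sum_(p <= j < P) d j * b ^ j)%N) ?addn0 //.
rewrite big_seq; apply: dvdn_sum => j; rewrite mem_index_iota => /andP[le_pj _].
by rewrite dvdn_mull // dvdn_exp2l.
Qed.

Lemma digitS b n j : digit b n j.+1 = digit b (n %/ b) j.
Proof. by rewrite /digit expnS divnMA. Qed.

Lemma digit_small b n j : (n < b ^ j)%N -> digit b n j = 0%N.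
Proof. by move=> n_lt; rewrite /digit divn_small ?mod0n. Qed.

Lemma radinv_digits_frac b n K : (1 < b)%N -> (n < b ^ K)%N ->
  radinv b n = digits_frac b (digit b n) K.
Proof.
move=> b_gt1 n_lt.
have tail K' : (n < b ^ K')%N -> (forall j, K' <= j -> digit b n j = 0)%N.
  move=> n_lt' j le_j; apply: digit_small.
  by apply: leq_trans n_lt' _; rewrite leq_pexp2l // ltnW.
have n_lt_n1 : (n < b ^ n.+1)%N by rewrite (ltn_trans (ltn_expl n b_gt1)) ?ltn_exp2l.
rewrite /radinv -/(digits_frac b (digit b n) n.+1).
case: (leqP K n.+1) => [le_K|/ltnW le_n1].
  exact: digits_frac_widen (tail _ n_lt) le_K.
by rewrite (digits_frac_widen b (tail _ n_lt_n1) le_n1).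
Qed.

Lemma radinvE b n : (1 < b)%N -> radinv b n = ((n %% b)%:R + radinv b (n %/ b)) / b%:R.
Proof.
move=> b_gt1; have n_lt : (n < b ^ n.+1)%N.
  by rewrite (ltn_trans (ltn_expl n b_gt1)) ?ltn_exp2l.
rewrite (radinv_digits_frac b_gt1 n_lt) digits_fracS /digit expn0 divn1.
rewrite (radinv_digits_frac (K := n) b_gt1); last first.
  exact: leq_ltn_trans (leq_div n b) (ltn_expl n b_gt1).
by congr (_ / _); congr (_ + _); apply: eq_bigr => j _; rewrite -digitS.
Qed.

Lemma radinv_ge0 b n : 0 <= radinv b n.
Proof. exact: digits_frac_ge0. Qed.

Lemma radinv_lt1 b n : (0 < b)%N -> radinv b n < 1.
Proof. by move=> b_gt0; apply: digits_frac_lt1 => j; rewrite ltn_pmod. Qed.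

Lemma modn_mul_split n b c : (0 < b)%N -> (0 < c)%N ->
  (n %% (b * c) = n %% b + b * (n %/ b %% c))%N.
Proof.
move=> b_gt0 c_gt0; rewrite {1}(divn_eq n b) {1}(divn_eq (n %/ b) c).
have := ltn_pmod (n %/ b) c_gt0; have := ltn_pmod n b_gt0.
set r := (n %/ b %% c)%N; set x := (n %% b)%N => x_lt r_lt.
rewrite mulnDl -mulnA [(c * b)%N]mulnC -addnA modnMDl modn_small; nia.
Qed.

Lemma eq_digit_split b x r y c : (x < b)%N -> (y < b)%N ->
  (x + b * r == y + b * c)%N = (x == y) && (r == c).
Proof.
move=> x_lt y_lt; apply/eqP/andP => [eq_xy | [/eqP-> /eqP->] //].
have eq_low : x = y.
  have := congr1 (modn^~ b) eq_xy.
  by rewrite /= ![(b * _)%N]mulnC !(addnC _ (_ * b)) !modnMDl !modn_small.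
move: eq_xy; rewrite eq_low => /addnI/eqP.
by rewrite eqn_mul2l gtn_eqF ?(leq_ltn_trans _ y_lt).
Qed.

Lemma ltr_natD_frac (x c : nat) (u v : rat) : 0 <= u < 1 -> 0 <= v < 1 ->
  (x%:R + u < c%:R + v) = (x < c)%N || ((x == c) && (u < v)).
Proof.
move=> /andP[u_ge0 u_lt1] /andP[v_ge0 v_lt1].
case: (ltngtP x c) => [lt_xc|lt_cx|->] /=; last by rewrite ltrD2l.
- have : (x.+1%:R <= c%:R :> rat) by rewrite ler_nat.
  by rewrite -addn1 natrD; lra.
- have : (c.+1%:R <= x%:R :> rat) by rewrite ler_nat.
  by rewrite -addn1 natrD; lra.
Qed.

(* [n = digits_nat b d p %[mod b ^ p.+1]] says that the first [p] base-[b]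
   digits of [n] are [d 0, ..., d p.-1] and that its digit [p] is 0. *)
Definition prefix_hits (b : nat) (d : nat -> nat) (L n : nat) : nat :=
  (\sum_(p < L | 0 < d p) (n %% b ^ p.+1 == digits_nat b d p))%N.

Lemma prefix_hitsS b d L n : (1 < b)%N -> (d 0%N < b)%N ->
  prefix_hits b d L.+1 n = ((0 < d 0%N) && (n %% b == 0) +
    (n %% b == d 0%N) * prefix_hits b (fun j => d j.+1) L (n %/ b))%N.
Proof.
move=> b_gt1 d0_lt; have b_gt0 := ltnW b_gt1.
rewrite /prefix_hits !big_mkcond big_ord_recl /= expn1 /digits_nat big_ord0.
congr (_ + _)%N; first by case: (0 < d 0%N)%N.
rewrite [in RHS]big_mkcond big_distrr /=; apply: eq_bigr => j _.
rewrite /bump leq0n add1n; case: (0 < d j.+1)%N; last by rewrite muln0.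
rewrite -/(digits_nat b d j.+1) digits_natS expnS modn_mul_split ?expn_gt0 ?b_gt0 //.
by rewrite eq_digit_split ?ltn_pmod //; case: (_ == _); case: (_ == _).
Qed.

(* As the digits [d] are 0 or 1, [radinv b n < digits_frac b d L] iff at the
   first place where the digits differ [n] has a 0 and [d] a 1; there is at most
   one such place, hence a count equals the boolean. *)
Lemma radinv_lt_digits_frac b d L n : (1 < b)%N -> (forall j, d j <= 1)%N ->
  nat_of_bool (radinv b n < digits_frac b d L) = prefix_hits b d L n.
Proof.
move=> b_gt1; have b_gt0 := ltnW b_gt1.
elim: L d n => [|L IH] d n d01.
  by rewrite /digits_frac /prefix_hits !big_ord0 ltNge radinv_ge0.
have d_lt_b j : (d j < b)%N := leq_ltn_trans (d01 j) b_gt1.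
rewrite prefix_hitsS // -IH // radinvE // digits_fracS ltr_pM2r ?invr_gt0 ?ltr0n //.
rewrite ltr_natD_frac ?radinv_ge0 ?radinv_lt1 ?digits_frac_ge0 ?digits_frac_lt1 //.
case: (d 0%N) (d01 0%N) => [|[|//]] _ /=; case: (radinv _ _ < _);
  by case: (n %% b)%N => [|[|]].
Qed.

(* The digits of [\sum_(k >= 1) b ^- (t * k)]: a 1 at the places t - 1, 2 t - 1, ... *)
Definition period_digit (t q : nat) : nat := (t %| q.+1)%N.

Lemma big_ord_dvdS (R : Type) (idx : R) (op : Monoid.com_law idx) (F : nat -> R) t K :
  (0 < t)%N ->
  \big[op/idx]_(p < K * t | (t %| p.+1)%N) F p = \big[op/idx]_(k < K) F (t * k.+1).-1.
Proof.
case: t => // t _; elim: K => [|K IH]; first by rewrite !big_ord0.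
rewrite big_ord_recr /= -IH -!(big_mkord (fun p => t.+1 %| p.+1)%N F).
rewrite mulSn addnC (@big_cat_nat _ _ _ (K * t.+1)) ?leq_addr //=; congr (op _ _).
rewrite addnS big_mkcond big_nat_recr /= ?leq_addr // big1_seq ?Monoid.mul1m.
  by rewrite -addnS dvdn_add ?dvdn_mull //; congr F; lia.
move=> p /andP[_]; rewrite mem_index_iota => /andP[lo hi].
case: ifP => // /dvdnP[q def_p]; exfalso.
have lt_Kq : (K < q)%N by rewrite -(ltn_pmul2r (ltn0Sn t)) -def_p ltnS.
have : (q < K.+1)%N by rewrite -(ltn_pmul2r (ltn0Sn t)) -def_p mulSn addnC addnS ltnS.
by rewrite ltnS leqNgt lt_Kq.
Qed.

Lemma digits_frac_period b t m : (0 < t)%N ->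
  digits_frac b (period_digit t) (m * t) = \sum_(k < m) ((b ^ (t * k.+1))%:R)^-1.
Proof.
move=> t_gt0; rewrite /digits_frac (bigID (fun q : 'I_(m * t) => t %| q.+1)%N) /=.
rewrite [X in _ + X]big1 ?addr0 => [|q /negbTE]; last first.
  by rewrite /period_digit => ->; rewrite mul0r.
rewrite (eq_bigr (fun q : 'I_(m * t) => ((b ^ q.+1)%:R)^-1)) => [|q]; last first.
  by rewrite /period_digit => ->; rewrite mul1r.
rewrite (big_ord_dvdS _ (fun q => ((b ^ q.+1)%:R)^-1)) //.
by apply: eq_bigr => k _; rewrite prednK // muln_gt0 t_gt0.
Qed.

Lemma prefix_hits_period b t m n : (0 < t)%N ->
  prefix_hits b (period_digit t) (m * t) n =
  (\sum_(k < m) (n %% b ^ (t * k.+1) == digits_nat b (period_digit t) (t * k.+1).-1))%N.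
Proof.
move=> t_gt0; rewrite /prefix_hits (eq_bigl (fun p : 'I_(m * t) => t %| p.+1)%N) => [|p];
  last by rewrite lt0b.
rewrite (big_ord_dvdS _
  (fun p => nat_of_bool (n %% b ^ p.+1 == digits_nat b (period_digit t) p)%N)) //.
by apply: eq_bigr => k _; rewrite prednK // muln_gt0 t_gt0.
Qed.

Lemma radinv_lt_geometric b t m n : (1 < b)%N -> (0 < t)%N ->
  nat_of_bool (radinv b n < \sum_(k < m) ((b ^ (t * k.+1))%:R)^-1) =
  (\sum_(k < m) (n %% b ^ (t * k.+1) == digits_nat b (period_digit t) (t * k.+1).-1))%N.
Proof.
move=> b_gt1 t_gt0; rewrite -digits_frac_period // radinv_lt_digits_frac //.
  exact: prefix_hits_period.
by move=> j; apply: leq_b1.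
Qed.

Lemma digits_nat_period b t m : (0 < t)%N ->
  (\sum_(1 <= j < m.+1) b ^ (j * t - 1))%N = digits_nat b (period_digit t) (m * t).
Proof.
move=> t_gt0; rewrite /digits_nat (bigID (fun q : 'I_(m * t) => t %| q.+1)%N) /=.
rewrite [X in (_ + X)%N]big1 ?addn0 => [|q /negbTE]; last by rewrite /period_digit => ->.
rewrite (eq_bigr (fun q : 'I_(m * t) => b ^ q)%N) => [|q]; last first.
  by rewrite /period_digit => ->; rewrite mul1n.
rewrite (big_ord_dvdS _ (fun q => b ^ q)%N) // big_add1 big_mkord.
by apply: eq_bigr => k _; rewrite subn1 mulnC.
Qed.

Lemma digits_nat_period_pred b t k : (0 < t * k)%N ->
  digits_nat b (period_digit t) (t * k) =
  (digits_nat b (period_digit t) (t * k).-1 + b ^ (t * k).-1)%N.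
Proof.
move=> tk_gt0; rewrite -{1}(prednK tk_gt0) digits_nat_recr.
by rewrite /period_digit prednK // dvdn_mulr // mul1n.
Qed.

Lemma chinese_remainder_big (I : finType) (q : I -> nat) x y :
  (forall i j, i != j -> coprime (q i) (q j)) ->
  (x == y %[mod \prod_i q i])%N = [forall i, x == y %[mod q i]]%N.
Proof.
move=> q_coprime.
have crt_seq (r : seq I) : uniq r ->
    (x == y %[mod \prod_(i <- r) q i])%N = all (fun i => x == y %[mod q i])%N r.
  elim: r => [|j r IH] /=; first by rewrite big_nil !modn1.
  case/andP => j_notin_r r_uniq; rewrite big_cons chinese_remainder ?IH //.
  rewrite big_seq; elim/big_rec: _ => [|i z i_in_r]; first exact: coprimen1.
  by rewrite coprimeMr => ->; rewrite q_coprime //; apply: contraNneq j_notin_r => ->.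
rewrite crt_seq ?index_enum_uniq //; apply/allP/forallP => [qx i | qx i _].
  by apply: qx; rewrite mem_index_enum.
exact: qx.
Qed.

Section PowerProducts.
Variables (s : nat) (b : 'I_s -> nat).
Hypothesis b_gt0 : forall i, (0 < b i)%N.

Lemma Bpow_gt0 r : (0 < Bpow b r)%N.
Proof. by rewrite /Bpow prodn_gt0 // => i; rewrite expn_gt0 b_gt0. Qed.

Lemma Bpow_div_expn r i : (Bpow b r %/ b i ^ r i = \prod_(j | j != i) b j ^ r j)%N.
Proof. by rewrite /Bpow (bigD1 i) //= mulKn // expn_gt0 b_gt0. Qed.

Lemma Bpow_div r i : (0 < r i)%N ->
  (Bpow b r %/ b i = Bpow b r %/ b i ^ r i * b i ^ (r i).-1)%N.
Proof.
move=> ri_gt0; rewrite Bpow_div_expn /Bpow (bigD1 i) //= -(prednK ri_gt0) expnS.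
by rewrite -mulnA mulKn ?b_gt0 // mulnC.
Qed.

Lemma dvdn_Bpow r i : (b i ^ r i %| Bpow b r)%N.
Proof. by rewrite /Bpow (bigD1 i) //= dvdn_mulr. Qed.

Lemma dvdn_Bpow_div_expn r i j : i != j -> (b i ^ r i %| Bpow b r %/ b j ^ r j)%N.
Proof. by move=> neq_ij; rewrite Bpow_div_expn (bigD1 i) ?dvdn_mulr. Qed.

Lemma Bpow_dvdn r r' : (forall i, r i <= r' i)%N -> (Bpow b r %| Bpow b r')%N.
Proof.
move=> le_rr'; rewrite /Bpow; elim/big_ind2: _ => // [x1 x2 y1 y2|i _].
  exact: dvdn_mul.
by rewrite dvdn_exp2l.
Qed.

End PowerProducts.

Lemma eqn_mod_dvdz (x y d : nat) : (x == y %[mod d])%N = (d%:Z %| x%:Z - y%:Z)%Z.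
Proof. by rewrite -eqz_mod_dvd !modz_nat eqz_nat. Qed.

Lemma dvdz_absz_modz (X : int) (Q q : nat) : (0 < Q)%N -> (q %| Q)%N ->
  (q%:Z %| (absz (X %% Q%:Z)%Z)%:Z - X)%Z.
Proof.
move=> Q_gt0 q_dvd_Q; have Q_neq0 : Q%:Z != 0 by rewrite eqz_nat -lt0n.
rewrite abszE ger0_norm ?modz_ge0 // {2}(divz_eq X Q%:Z) opprD addrCA subrr addr0.
by rewrite rpredN dvdz_mull // dvdzE !absz_nat.
Qed.

Section ResidueClasses.
Variables (s : nat) (b : 'I_s -> nat) (M : 'I_s -> ('I_s -> nat) -> int).
Hypotheses (b_gt0 : forall i, (0 < b i)%N) (M_spec : Mspec b M).

(* The numbers [M i r * (Bpow b r %/ b i ^ r i)] are the idempotents of the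
   Chinese remainder theorem modulo the pairwise coprime [b i ^ r i]. *)
Lemma Mspec_sum_mod r (X : 'I_s -> int) i : (forall j, 0 < r j)%N ->
  ((b i ^ r i)%N%:Z %| \sum_j M j r * (Bpow b r %/ b j ^ r j)%N%:Z * X j - X i)%Z.
Proof.
move=> r_gt0; rewrite (bigD1 i) //= addrAC; apply: rpredD.
  have := M_spec r_gt0 i; rewrite eqz_mod_dvd => M_inv.
  by rewrite -[X in _ - X]mul1r -mulrBl dvdz_mulr.
apply: rpred_sum => j neq_ji; rewrite dvdz_mulr // dvdz_mull //.
by rewrite dvdzE !absz_nat dvdn_Bpow_div_expn // eq_sym.
Qed.
Hypothesis tau_gt0 : forall i, (0 < tau b i)%N.

Lemma Acoef_mod k i : (forall j, 0 < k j)%N ->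
  (Acoef b M k + b i ^ (tauk b k i).-1 = 0 %[mod b i ^ tauk b k i])%N.
Proof.
move=> k_gt0; set r := tauk b k.
have r_gt0 j : (0 < r j)%N by rewrite muln_gt0 tau_gt0 k_gt0.
apply/eqP; rewrite eqn_mod_dvdz subr0 PoszD.
pose Y := \sum_j M j r * (Bpow b r %/ b j)%N%:Z; pose X := - Y.
have Acoef_X : ((b i ^ r i)%N%:Z %| (Acoef b M k)%:Z - X)%Z.
  exact: dvdz_absz_modz (Bpow_gt0 b_gt0 r) (dvdn_Bpow b r i).
have Y_mod : ((b i ^ r i)%N%:Z %| Y - (b i ^ (r i).-1)%:Z)%Z.
  have -> : Y = \sum_j M j r * (Bpow b r %/ b j ^ r j)%N%:Z * (b j ^ (r j).-1)%:Z.
    by apply: eq_bigr => j _; rewrite Bpow_div // PoszM mulrA.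
  exact: Mspec_sum_mod.
have -> : (Acoef b M k)%:Z + (b i ^ (r i).-1)%:Z =
          ((Acoef b M k)%:Z - X) - (Y - (b i ^ (r i).-1)%:Z) by rewrite /X; ring.
exact: rpredB.
Qed.

Lemma ytilde_mod m i :
  (ytilde b M m = digits_nat (b i) (period_digit (tau b i)) (m.+1 * tau b i)
     %[mod b i ^ (tau b i * m.+1)])%N.
Proof.
set r := taul b m.+1.
have r_gt0 j : (0 < r j)%N by rewrite muln_gt0 tau_gt0.
apply/eqP; rewrite eqn_mod_dvdz -digits_nat_period //.
rewrite (big_morph Posz PoszD (erefl 0%:Z)).
pose S j := \sum_(1 <= l < m.+2) (b j ^ (l * tau b j - 1))%N%:Z.
pose Y := \sum_j M j r * (Bpow b r %/ b j ^ (tau b j * m.+1))%N%:Z * S j.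
have y_Y : ((b i ^ r i)%N%:Z %| (ytilde b M m)%:Z - Y)%Z.
  exact: dvdz_absz_modz (Bpow_gt0 b_gt0 r) (dvdn_Bpow b r i).
have := Mspec_sum_mod S i r_gt0.
by rewrite -(rpredDl _ y_Y) addrA subrK.
Qed.

Lemma ytilde_Acoef_mod m k i : (forall j, 0 < k j <= m.+1)%N ->
  (ytilde b M m + Acoef b M k =
     digits_nat (b i) (period_digit (tau b i)) (tauk b k i).-1 %[mod b i ^ tauk b k i])%N.
Proof.
move=> k_bounds; have k_gt0 j : (0 < k j)%N by case/andP: (k_bounds j).
have le_tk : (tauk b k i <= m.+1 * tau b i)%N.
  by rewrite mulnC leq_mul2l; case/andP: (k_bounds i) => _ ->; rewrite orbT.
have q_dvd : (b i ^ tauk b k i %| b i ^ (tau b i * m.+1))%N.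
  by rewrite dvdn_exp2l // mulnC.
have y_mod : (ytilde b M m = digits_nat (b i) (period_digit (tau b i)) (tauk b k i)
                %[mod b i ^ tauk b k i])%N.
  by rewrite -(modn_dvdm (ytilde b M m) q_dvd) ytilde_mod modn_dvdm ?digits_nat_mod.
rewrite -modnDml y_mod modnDml digits_nat_period_pred ?muln_gt0 ?tau_gt0 ?k_gt0 //.
by rewrite -addnA -modnDmr [(b i ^ _ + _)%N]addnC -/(tauk b k i) Acoef_mod // mod0n addn0.
Qed.
End ResidueClasses.

Lemma sum_periodic (V : nmodType) (F : nat -> V) (Q P : nat) :
  (forall N, F (N + Q)%N = F N) ->
  \sum_(1 <= N < (P * Q).+1) F N = (\sum_(1 <= N < Q.+1) F N) *+ P.
Proof.
move=> F_per; have F_perM N P' : F (N + P' * Q)%N = F N.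
  elim: P' => [|P' IH]; first by rewrite mul0n addn0.
  by rewrite mulSnr addnA F_per.
elim: P => [|P IH]; first by rewrite big_geq.
rewrite mulSnr mulrSr -IH (@big_cat_nat _ _ _ (P * Q).+1) ?ltnS ?leq_addr //=.
congr (_ + _); rewrite -[(P * Q).+1]add1n big_addn -addnS addKn.
by apply: eq_bigr => N _; rewrite F_perM.
Qed.

Section ResidueClassDiscrepancy.
Variables Q A : nat.
Hypotheses (Q_gt0 : (0 < Q)%N) (A_lt_Q : (A < Q)%N).

Definition class_disc (t : nat) : rat := (t %% Q == A)%N%:R - (Q%:R)^-1.

Definition class_disc_sum (N : nat) : rat := \sum_(0 <= t < N) class_disc t.

Lemma class_disc_sum_small N : (N <= Q)%N ->
  class_disc_sum N = (A < N)%N%:R - N%:R / Q%:R.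
Proof.
move=> le_NQ; rewrite /class_disc_sum sumrB sumr_const_nat subn0 [in RHS]mulr_natl.
congr (_ - _); elim: N le_NQ => [|N IH] le_N1Q; first by rewrite big_geq // ltn0.
rewrite big_nat_recr //= (IH (ltnW le_N1Q)) modn_small // -natrD ltnS.
by case: ltngtP.
Qed.

Lemma class_disc_sum_period N : class_disc_sum (N + Q) = class_disc_sum N.
Proof.
rewrite /class_disc_sum addnC (@big_cat_nat _ _ _ Q) ?leq_addr //= -/(class_disc_sum Q).
rewrite class_disc_sum_small // A_lt_Q divff ?pnatr_eq0 -?lt0n // subrr add0r.
rewrite (big_addn 0 _ Q) addKn.
by apply: eq_bigr => t _; rewrite /class_disc modnDr.
Qed.

Lemma sum_class_disc_sum_period :
  \sum_(1 <= N < Q.+1) class_disc_sum N = (Q - A)%N%:R - Q.+1%:R / 2%:R.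
Proof.
rewrite (eq_big_nat _ _ (F2 := fun N => (A < N)%N%:R - N%:R / Q%:R)); last first.
  by move=> N /andP[_ le_NQ]; rewrite class_disc_sum_small.
have count_gt K : (\sum_(1 <= N < K.+1) (A < N))%N = (K - A)%N.
  elim: K => [|K IH]; first by rewrite big_geq.
  by rewrite big_nat_recr //= IH; case: (ltnP A K.+1) => ?; lia.
have triangular K : \sum_(1 <= N < K.+1) N%:R = (K * K.+1)%N%:R / 2%:R :> rat.
  elim: K => [|K IH]; first by rewrite big_geq // mul0n mul0r.
  rewrite big_nat_recr //= IH (_ : K.+1 * K.+2 = K * K.+1 + 2 * K.+1)%N; last lia.
  by rewrite natrD natrM; field.
rewrite sumrB -mulr_suml -natr_sum count_gt triangular natrM.
by field; rewrite pnatr_eq0 -lt0n.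
Qed.

Lemma mean_class_disc_sum P : (0 < P)%N ->
  ((P * Q)%N%:R)^-1 * \sum_(1 <= N < (P * Q).+1) class_disc_sum N =
  2%:R^-1 - A%:R / Q%:R - (2%:R * Q%:R)^-1.
Proof.
move=> P_gt0; rewrite sum_periodic; last exact: class_disc_sum_period.
rewrite sum_class_disc_sum_period -mulr_natl natrB ?(ltnW A_lt_Q) // natrM -(natr1 Q).
by field; rewrite !pnatr_eq0 -!lt0n P_gt0 Q_gt0.
Qed.
End ResidueClassDiscrepancy.

Lemma totient_lt n : (1 < n)%N -> (totient n < n)%N.
Proof.
move=> n_gt1; rewrite totient_count_coprime big_ltn ?(ltnW n_gt1) //.
rewrite /coprime gcdn0 gtn_eqF // add0n.
apply: leq_ltn_trans (_ : \sum_(1 <= d < n) 1 < n)%N.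
  by apply: leq_sum => d _; apply: leq_b1.
by rewrite sum_nat_const_nat muln1 subn1 ltn_predL ltnW.
Qed.

Section OrderTau.
Variables (s : nat) (b : 'I_s -> nat).
Hypotheses (s_ge2 : (2 <= s)%N) (b_gt1 : forall i, (1 < b i)%N).
Hypothesis b_coprime : forall i j, i != j -> coprime (b i) (b j).

Lemma Bexc_prod i : Bexc b i = (\prod_(j | j != i) b j)%N.
Proof. by rewrite /Bexc /Bprod (bigD1 i) //= mulKn // ltnW. Qed.

Lemma Bexc_gt1 i : (1 < Bexc b i)%N.
Proof.
have [j neq_ji] : exists j : 'I_s, j != i.
  have : (0 < #|predC1 i|)%N by rewrite cardC1 card_ord -subn1 subn_gt0.
  by case/card_gt0P => j; exists j.
rewrite Bexc_prod (bigD1 j) //= (leq_trans (b_gt1 j)) // leq_pmulr //.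
by rewrite prodn_gt0 // => l; rewrite ltnW.
Qed.

Lemma coprime_Bexc i : coprime (b i) (Bexc b i).
Proof.
rewrite Bexc_prod; elim/big_rec: _ => [|j z neq_ji]; first exact: coprimen1.
by rewrite coprimeMr => ->; rewrite b_coprime // eq_sym.
Qed.

Lemma tau_gt0 i : (0 < tau b i)%N.
Proof.
rewrite /tau; set l := filter _ _.
have totient_in_l : totient (Bexc b i) \in l.
  rewrite mem_filter Euler_exp_totient ?coprime_Bexc // eqxx mem_iota add1n.
  by rewrite prednK ?totient_gt0 ?totient_lt ?Bexc_gt1 ?(ltnW (Bexc_gt1 i)).
have : head 0%N l \in l by case: (l) totient_in_l => // x l' _; exact: mem_head.
by rewrite mem_filter mem_iota => /and3P[_ ].
Qed.
End OrderTau.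

Lemma prodr_natb (R : comPzSemiRingType) (I : finType) (P : pred I) :
  \prod_i (P i)%:R = [forall i, P i]%:R :> R.
Proof.
case: (boolP [forall i, P i]) => [/forallP P_all | /forallPn [i /negbTE not_Pi]].
  by rewrite big1 // => i _; rewrite P_all.
by rewrite (bigD1 i) //= not_Pi mul0r.
Qed.

Lemma yvecE s (b : 'I_s -> nat) m i :
  yvec b m i = \sum_(k < m) ((b i ^ (tau b i * k.+1))%:R)^-1.
Proof. by rewrite /yvec big_add1 big_mkord; apply: eq_bigr => k _; rewrite mulnC. Qed.

Section HaltonBox.
Variables (s : nat) (b : 'I_s -> nat) (M : 'I_s -> ('I_s -> nat) -> int) (m : nat).
Hypotheses (b_gt1 : forall i, (1 < b i)%N) (M_spec : Mspec b M).
Hypothesis b_coprime : forall i j, i != j -> coprime (b i) (b j).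
Hypothesis tau_gt0 : forall i, (0 < tau b i)%N.

Let b_gt0 i : (0 < b i)%N := ltnW (b_gt1 i).

Definition box_residue (i : 'I_s) (k : nat) : nat :=
  digits_nat (b i) (period_digit (tau b i)) (tau b i * k).-1.

Lemma box_indicatorE n :
  (if [forall i, (0 <= halton b n i) && (halton b n i < yvec b m i)] then 1 else 0)
  = \sum_(k : {ffun 'I_s -> 'I_m})
      [forall i, n %% b i ^ (tau b i * (k i).+1) == box_residue i (k i).+1]%N%:R :> rat.
Proof.
under eq_forallb => i do rewrite /halton radinv_ge0 andTb.
rewrite (_ : forall c : bool, (if c then 1 else 0) = c%:R :> rat) => [|[]] //.
rewrite -(prodr_natb _ (fun i => radinv (b i) n < yvec b m i)).
under eq_bigr => i _ do rewrite yvecE radinv_lt_geometric // natr_sum.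
by rewrite bigA_distr_bigA; apply: eq_bigr => k _; rewrite prodr_natb.
Qed.

Lemma volume_yvec :
  \prod_i yvec b m i =
  \sum_(k : {ffun 'I_s -> 'I_m}) ((Bpow b (tauk b (fun i => (k i).+1)))%:R)^-1.
Proof.
under eq_bigr => i _ do rewrite yvecE.
by rewrite bigA_distr_bigA; apply: eq_bigr => k _; rewrite /Bpow natr_prod prodfV.
Qed.

Lemma Acoef_lt k : (Acoef b M k < Bpow b (tauk b k))%N.
Proof.
have B_gt0 : (0 < Bpow b (tauk b k))%N := Bpow_gt0 b_gt0 _.
by rewrite -ltz_nat /Acoef abszE ger0_norm ?modz_ge0 ?ltz_pmod ?ltz_nat // eqz_nat -lt0n.
Qed.

Lemma box_indicator_shift (k : {ffun 'I_s -> 'I_m}) t :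
  [forall i, (ytilde b M m + t) %% b i ^ (tau b i * (k i).+1) == box_residue i (k i).+1]%N =
  (t %% Bpow b (tauk b (fun i => (k i).+1)) == Acoef b M (fun i => (k i).+1))%N.
Proof.
set kk := fun i => (k i).+1; rewrite -[Acoef b M kk](modn_small (Acoef_lt kk)).
rewrite [Bpow b _]/Bpow chinese_remainder_big => [|i j neq_ij]; last first.
  by rewrite coprimeXl // coprimeXr // b_coprime.
apply: eq_forallb => i.
have res_lt : (box_residue i (k i).+1 < b i ^ (tau b i * (k i).+1))%N.
  have digit_lt q : (period_digit (tau b i) q < b i)%N := leq_ltn_trans (leq_b1 _) (b_gt1 i).
  exact: leq_trans (digits_nat_lt _ digit_lt) (leq_pexp2l (b_gt0 i) (leq_pred _)).
rewrite -(modn_small res_lt) /box_residue.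
rewrite -(ytilde_Acoef_mod b_gt0 M_spec tau_gt0 (m := m) (k := kk)) => [|j].
  by rewrite eqn_modDl.
exact: ltnW (ltn_ord (k j)).
Qed.

Lemma alphaE :
  alpha b M m =
  \sum_(k : {ffun 'I_s -> 'I_m})
     (let kk := fun i => (k i).+1 in
      let Bk := (Bpow b (tauk b kk))%:R : rat in
      2%:R^-1 - (Acoef b M kk)%:R / Bk - (2%:R * Bk)^-1).
Proof.
rewrite /alpha /Delta /=.
under eq_bigr => N _.
  under eq_bigr => n _ do rewrite box_indicatorE volume_yvec -sumrB.
  rewrite exchange_big /=.
  over.
rewrite exchange_big /= mulr_sumr; apply: eq_bigr => k _.
set kk := fun i => (k i).+1; set Q := Bpow b (tauk b kk); set L := Bpow b (taul b m).
have Q_gt0 : (0 < Q)%N := Bpow_gt0 b_gt0 _.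
have Q_dvd_L : (Q %| L)%N by apply: Bpow_dvdn => i; rewrite leq_mul2l ltn_ord orbT.
have P_gt0 : (0 < L %/ Q)%N by rewrite divn_gt0 // dvdn_leq // Bpow_gt0.
rewrite -(mean_class_disc_sum Q_gt0 (Acoef_lt kk) P_gt0) divnK //.
congr (_ * _); apply: eq_bigr => N _.
rewrite /class_disc_sum (big_addn 0 _ (ytilde b M m)) addKn.
by apply: eq_bigr => t _; rewrite [(t + _)%N]addnC box_indicator_shift.
Qed.
End HaltonBox.

Theorem lemma4p4 (s : nat) (b : 'I_s -> nat) (M : 'I_s -> ('I_s -> nat) -> int)
    (m : nat) :
  (2 <= s)%N ->
  (forall i, (2 <= b i)%N) ->
  (forall i j, i != j -> coprime (b i) (b j)) ->
  Mspec b M ->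
  (Bprod b <= m)%N ->
  alpha b M m =
  \sum_(k : {ffun 'I_s -> 'I_m})
     (let kk := fun i => (k i).+1 in
      let Bk := (Bpow b (tauk b kk))%:R : rat in
      2%:R^-1 - (Acoef b M kk)%:R / Bk - (2%:R * Bk)^-1).
Proof.
move=> s_ge2 b_gt1 b_coprime M_spec _.
exact: alphaE b_gt1 M_spec b_coprime (tau_gt0 s_ge2 b_gt1 b_coprime).
Qed.
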